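(* If a semigroup $X$ is $\mathsf{T_{z}S}$-closed, then for every infinite subset $A\subseteq Z(X)$ the set $AA=\{xy:x,y\in A\}$ is not a singleton.
   Context: $\mathsf{T_{z}S}$ is the class of Hausdorff zero-dimensional topological semigroups. A semigroup $X$ is $\mathsf{T_{z}S}$-closed if for every isomorphic topological embedding of $X$ (discrete topology) into some $Y\in\mathsf{T_{z}S}$ the image is closed in $Y$. $Z(X)$ is the center of $X$. *)

From HB Require Import structures.
From mathcomp Require Import all_boot all_order all_algebra.
From mathcomp Require Import all_classical all_reals all_analysis.
Set Implicit Arguments. Unset Strict Implicit. Unset Printing Implicit Defensive.
Local Open Scope classical_set_scope.

Definition associative_op (S : Type) (m : S -> S -> S) :=
  forall x y z, m x (m y z) = m (m x y) z.

Definition zero_dim (Y : topologicalType) :=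
  forall (U : set Y) (y : Y), open U -> U y ->
    exists V : set Y, [/\ clopen V, V y & V `<=` U].

Definition TzS (Y : topologicalType) (mY : Y -> Y -> Y) :=
  [/\ associative_op mY,
      continuous (fun p : Y * Y => mY p.1 p.2),
      hausdorff_space Y & zero_dim Y].

(* h : X -> Y is an isomorphic topological embedding of the discrete
   semigroup X into Y: an injective homomorphism that is a homeomorphism
   of X (discrete) onto its image (with the subspace topology), i.e. the
   image is a discrete subspace of Y. *)
Definition discrete_semigroup_embedding (X : Type) (mX : X -> X -> X)
  (Y : topologicalType) (mY : Y -> Y -> Y) (h : X -> Y) :=
  [/\ injective h,
      (forall x y, h (mX x y) = mY (h x) (h y)) &
      (forall x, exists U : set Y, open U /\ U `&` range h = [set h x])].

Definition TzS_closed (X : Type) (mX : X -> X -> X) :=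
  forall (Y : topologicalType) (mY : Y -> Y -> Y) (h : X -> Y),
    TzS mY -> discrete_semigroup_embedding mX mY h -> closed (range h).

Definition sg_center (X : Type) (mX : X -> X -> X) : set X :=
  [set z | forall x, mX z x = mX x z].

Definition setmul (X : Type) (mX : X -> X -> X) (A : set X) : set X :=
  [set z | exists x y, [/\ A x, A y & z = mX x y]].

From HB Require Import structures.
From mathcomp Require Import all_boot all_order all_algebra.
From mathcomp Require Import all_classical all_reals all_analysis.
Local Open Scope classical_set_scope.

(* Suppose it does, and let U be a free ultrafilter on X containing A.  We
   build a Hausdorff zero-dimensional topological semigroup Y into which X
   embeds as a non-closed discrete subsemigroup.  The points of Y are
   ultrafilters on X: the principal ones, U itself and its right translates
   U.x = {B | {a | ax in B} in U}; the product is the convolution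
   F.G = {B | {x | {y | xy in B} in G} in F} and the topology is the Stone
   topology with the clopen basis B* = {F | B in F}.

   Then, for A and U as above, centrality of A
   and AA = {c} give (U.x)(U.y) = principal ((cx)y), which shows that the
   points listed above are closed under convolution and that the product is
   jointly continuous.  Finally U is in the closure of the copy of X but is
   not principal, so the copy is not closed. *)

Section Ultrafilters.
Context {X : Type}.

Definition is_ultra (F : set (set X)) :=
  [/\ F setT, (forall B C, F (B `&` C) <-> F B /\ F C) &
      (forall B, F (~` B) <-> ~ F B)].

Definition principal (z : X) : set (set X) := [set B | B z].

Lemma principal_ultra z : is_ultra (principal z).
Proof. by split => // B C; split => [[]|[]]. Qed.

Lemma ultra_up {F : set (set X)} {B C : set X} :
  is_ultra F -> B `<=` C -> F B -> F C.
Proof. by move=> [_ FI _] BC; rewrite -(setIidl BC) => /FI []. Qed.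

Lemma ultra_not0 {F : set (set X)} : is_ultra F -> ~ F set0.
Proof. by move=> [FT _ FC]; rewrite -setCT => /FC. Qed.

Lemma ultra_nonempty {F : set (set X)} {B : set X} : is_ultra F -> F B -> B !=set0.
Proof.
move=> Fu FB; apply: contrapT => nB; apply: (ultra_not0 Fu).
by rewrite (_ : set0 = B) //; apply/seteqP; split => // x Bx; apply: nB; exists x.
Qed.

Lemma ultra_principal {F : set (set X)} {z : X} :
  is_ultra F -> F [set z] -> F = principal z.
Proof.
move=> Fu Fz; apply/funext => B; apply/propext; split => [FB|Bz]; last first.
  by apply: (ultra_up Fu _ Fz) => x ->.
apply: contrapT => nBz; apply: (ultra_not0 Fu).
have [_ FI _] := Fu; have <- : B `&` [set z] = set0.
  by apply/seteqP; split => // x [Bx xz]; apply: nBz; rewrite -xz.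
exact/FI.
Qed.

Lemma image_ultra {T : Type} (U : set_system T) (f : T -> X) :
  UltraFilter U -> is_ultra [set B | U (f @^-1` B)].
Proof.
move=> Uu; split => /=.
- exact: filterT.
- move=> B C; split => [UBC|[UB UC]]; last exact: filterI.
  by split; apply: filterS UBC => t [].
- move=> B; split => [UnB UB|nUB]; last by case: (in_ultra_setVsetC (f @^-1` B) Uu).
  by apply: (filter_not_empty U); apply: filterS (filterI UnB UB) => t [].
Qed.

End Ultrafilters.

Section Convolution.
Context {X : Type} (mX : X -> X -> X).

(* Convolution of set systems, the product of the Stone-Cech semigroup. *)
Definition conv (F G : set (set X)) : set (set X) :=
  [set B | F [set x | G [set y | B (mX x y)]]].

Lemma conv_ultra {F G : set (set X)} : is_ultra F -> is_ultra G -> is_ultra (conv F G).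
Proof.
move=> Fu Gu; have [FT FI FC] := Fu; have [GT GI GC] := Gu; split => /=.
- by apply: (ultra_up Fu _ FT) => x _; apply: (ultra_up Gu _ GT).
- move=> B C; rewrite -FI; split => FBC.
    by apply: (ultra_up Fu _ FBC) => x /=; rewrite -GI.
  by apply: (ultra_up Fu _ FBC) => x /=; rewrite -GI.
- move=> B; rewrite -FC; split => FB.
    by apply: (ultra_up Fu _ FB) => x /=; rewrite -GC.
  by apply: (ultra_up Fu _ FB) => x /=; rewrite -GC.
Qed.

Lemma conv_assoc : associative_op mX ->
  forall F G H, conv F (conv G H) = conv (conv F G) H.
Proof.
move=> mA F G H; apply/funext => B; rewrite /conv /=.
by under eq_fun do under eq_fun do under eq_fun do rewrite mA.
Qed.

Lemma conv_principal_l {F G : set (set X)} {z : X} : is_ultra F -> F [set z] ->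
  conv F G = conv (principal z) G.
Proof. by move=> Fu /(ultra_principal Fu) ->. Qed.

Lemma conv_principal_r {F G : set (set X)} {w : X} : is_ultra G -> G [set w] ->
  conv F G = [set B | F [set x | B (mX x w)]].
Proof. by move=> Gu /(ultra_principal Gu) ->. Qed.

Lemma conv_const {F G : set (set X)} {C D : set X} {k : X} {B : set X} :
  is_ultra F -> is_ultra G -> (forall s t, C s -> D t -> mX s t = k) ->
  B k -> F C -> G D -> conv F G B.
Proof.
move=> Fu Gu CDk Bk FC GD; apply: (ultra_up Fu _ FC) => s Cs.
by apply: (ultra_up Gu _ GD) => t Dt /=; rewrite CDk.
Qed.

End Convolution.

Section Stone.
Context {X : Type} (P : set (set X) -> Prop).

Definition stone := {F : set (set X) | is_ultra F /\ P F}.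

HB.instance Definition _ := gen_eqMixin stone.
HB.instance Definition _ := gen_choiceMixin stone.

Definition basic (B : set X) : set stone := [set F | sval F B].

Lemma stone_ultra (F : stone) : is_ultra (sval F).
Proof. exact: (proj1 (svalP F)). Qed.

Lemma stone_inj (F G : stone) : sval F = sval G -> F = G.
Proof. by case: F G => F pF [G pG] /= FG; apply: eq_exist. Qed.

Lemma basic_cover : \bigcup_(B in [set: set X]) basic B = setT.
Proof. by apply/seteqP; split => // F _; exists setT => //; case: (stone_ultra F). Qed.

Lemma basic_join (B C : set X) (F : stone) : [set: set X] B -> [set: set X] C ->
  basic B F -> basic C F ->
  exists D, [/\ [set: set X] D, basic D F & basic D `<=` basic B `&` basic C].
Proof.
move=> _ _ FB FC; exists (B `&` C); split => //.
  by case: (stone_ultra F) => _ FI _; apply/FI.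
by move=> G; case: (stone_ultra G) => _ GI _ /GI.
Qed.

HB.instance Definition _ := isBaseTopological.Build stone basic_cover basic_join.

Lemma basic_open B : open (basic B).
Proof. by exists [set B] => //; apply/seteqP; split => F; [case=> _ ->|exists B]. Qed.

Lemma basic_setC B : basic (~` B) = ~` basic B.
Proof. by apply/seteqP; split => F; case: (stone_ultra F) => _ _ FC /FC. Qed.

Lemma basic_closed B : closed (basic B).
Proof. by rewrite -[B]setCK basic_setC; apply/open_closedC/basic_open. Qed.

Lemma basic_nbhs {F : stone} {B : set X} : sval F B -> nbhs F (basic B).
Proof. by move=> FB; apply: open_nbhs_nbhs; split => //; apply: basic_open. Qed.

Lemma nbhs_basic {F : stone} {W : set stone} :
  nbhs F W -> exists2 B, sval F B & basic B `<=` W.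
Proof.
rewrite nbhsE => -[V [[D _ <-] [B DB FB]] VW].
by exists B => // G GB; apply: VW; exists B.
Qed.

Lemma stone_hausdorff : hausdorff_space stone.
Proof.
suff sub (F G : stone) B : cluster (nbhs F) G -> sval F B -> sval G B.
  move=> F G FG; apply: stone_inj; apply/funext => B; apply/propext; split.
    exact: sub.
  by apply: sub => V W FV GW; rewrite setIC; apply: FG.
move=> FG FB; apply: contrapT => nGB.
have GnB : basic (~` B) G by rewrite basic_setC.
have [H [HB HnB]] := FG _ _ (basic_nbhs FB) (basic_nbhs GnB).
by move: HnB; rewrite basic_setC.
Qed.

Lemma stone_zero_dim : zero_dim stone.
Proof.
move=> W F oW WF; have [B FB BW] := nbhs_basic (open_nbhs_nbhs (conj oW WF)).
by exists (basic B); split => //; split; [apply: basic_open|apply: basic_closed].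
Qed.

End Stone.

Arguments stone_ultra {X P}.
Arguments stone_inj {X P F G}.

Section StoneSemigroup.
Context {X : Type} (mX : X -> X -> X) (P : set (set X) -> Prop).
Hypothesis P_principal : forall z, P (principal z).
Hypothesis P_conv : forall F G : stone P, P (conv mX (sval F) (sval G)).

Definition stone_mul (F G : stone P) : stone P :=
  exist _ (conv mX (sval F) (sval G))
    (conj (conv_ultra mX (stone_ultra F) (stone_ultra G)) (P_conv F G)).

Definition stone_point (z : X) : stone P :=
  exist _ (principal z) (conj (principal_ultra z) (P_principal z)).

Lemma stone_mul_assoc : associative_op mX -> associative_op stone_mul.
Proof. by move=> mA F G H; apply: stone_inj; apply: conv_assoc. Qed.

(* Joint continuity criterion: each set in a product F.G is forced by basic
   neighbourhoods of F and G. *)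
Definition locally_determined :=
  forall (F G : stone P) B, conv mX (sval F) (sval G) B ->
  exists C D, [/\ sval F C, sval G D & forall F' G' : stone P,
    sval F' C -> sval G' D -> conv mX (sval F') (sval G') B].

Lemma stone_mul_continuous : locally_determined ->
  continuous (fun p : stone P * stone P => stone_mul p.1 p.2).
Proof.
move=> loc [F G] W /nbhs_basic [B FGB BW].
have [C [D [FC GD CD]]] := loc F G B FGB.
exists (basic P C, basic P D); first by split; apply: basic_nbhs.
by move=> [F' G'] [/= F'C G'D]; apply: BW; apply: CD.
Qed.

Lemma stone_TzS : associative_op mX -> locally_determined -> TzS stone_mul.
Proof.
move=> mA loc; split; [exact: stone_mul_assoc|exact: stone_mul_continuous|
  exact: stone_hausdorff|exact: stone_zero_dim].
Qed.

Lemma stone_point_embedding : discrete_semigroup_embedding mX stone_mul stone_point.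
Proof.
split.
- move=> z w /(congr1 sval) /= zw.
  by have /= -> : principal w [set z] by rewrite -zw.
- by move=> z w; apply: stone_inj.
- move=> z; exists (basic P [set z]); split; first exact: basic_open.
  apply/seteqP; split => [F [Fz _]|F ->]; last by split; [|exists z].
  by apply: stone_inj; apply: ultra_principal (stone_ultra F) Fz.
Qed.

Lemma stone_point_dense (F : stone P) : closure (range stone_point) F.
Proof.
move=> W /nbhs_basic [B FB BW]; have [z Bz] := ultra_nonempty (stone_ultra F) FB.
by exists (stone_point z); split; [exists z|apply: BW].
Qed.

End StoneSemigroup.

Section FreeUltrafilter.
Context {X : Type} (A : set X).

Definition cofinite_in : set_system X :=
  [set B | exists2 S, finite_set S & A `\` S `<=` B].

Lemma cofinite_in_proper : ~ finite_set A -> ProperFilter cofinite_in.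
Proof.
move=> Ainf; apply: Build_ProperFilter_ex.
  move=> B [S finS AS_B]; apply: contrapT => nB; apply: Ainf.
  apply: (sub_finite_set _ finS) => a Aa; apply: contrapT => nSa.
  by apply: nB; exists a; apply: AS_B.
split.
- by exists set0 => //; exact: finite_set0.
- move=> B C [S finS AS_B] [T finT AT_C]; exists (S `|` T); first by rewrite finite_setU.
  move=> a [Aa nST]; split; [apply: AS_B|apply: AT_C].
    by split => // Sa; apply: nST; left.
  by split => // Ta; apply: nST; right.
- by move=> B C BC [S finS AS_B]; exists S => // a /AS_B /BC.
Qed.

Lemma free_ultrafilter : ~ finite_set A ->
  exists U : set_system X, [/\ UltraFilter U, U A & forall z, ~ U [set z]].
Proof.
move=> Ainf; have [U [Uu cofU]] := ultraFilterLemma (cofinite_in_proper Ainf).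
have UA : U A by apply: cofU; exists set0 => [|a []]; first exact: finite_set0.
exists U; split => // z Uz; apply: (filter_not_empty U).
have UAz : U (A `\` [set z]) by apply: cofU; exists [set z] => //; exact: finite_set1.
by apply: filterS (filterI UAz Uz) => a [[_ nz] az].
Qed.

End FreeUltrafilter.

Section Construction.
Context {X : Type} (mX : X -> X -> X) (A : set X) (c : X) (U : set_system X).
Hypothesis mX_assoc : associative_op mX.
Hypothesis A_central : forall a x, A a -> mX a x = mX x a.
Hypothesis AA_c : forall a b, A a -> A b -> mX a b = c.
Context (U_ultra : UltraFilter U).
Hypothesis UA : U A.

(* a.x for a in X and x in the monoid X^1 = option X. *)
Definition rmul (a : X) (x : option X) : X := if x is Some x then mX a x else a.

Definition lmul (x : option X) (w : X) : X := if x is Some x then mX x w else w.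

(* The translate U.x: the limit of a.x as a runs along U. *)
Definition tail (x : option X) : set (set X) := [set B | U [set a | B (rmul a x)]].

Definition point (k : X + option X) : set (set X) :=
  match k with inl z => principal z | inr x => tail x end.

Definition is_point (F : set (set X)) := exists k, F = point k.

Lemma principal_is_point z : is_point (principal z).
Proof. by exists (inl z). Qed.

Lemma tail_ultra x : is_ultra (tail x).
Proof. exact: (image_ultra U (rmul^~ x) U_ultra). Qed.

(* Since A is in U, U only sees the trace of a set on A. *)
Lemma U_agree (S T : set X) : (forall a, A a -> S a <-> T a) -> (U S <-> U T).
Proof.
by move=> ST; split => US; apply: filterS (filterI US UA) => a [Sa Aa]; apply/(ST a Aa).
Qed.

Lemma U_const (Q : Prop) : U [set _ | Q] <-> Q.
Proof. by split => [/filter_ex [] //|q]; apply: filterS UA. Qed.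

(* The three multiplication rules in X behind the convolution table of Y;
   the last one uses AA = {c} and the centrality of A. *)
Lemma rmul_left z a y : A a -> mX z (rmul a y) = rmul a (Some (rmul z y)).
Proof.
move=> Aa; case: y => [y|] /=; last by rewrite (A_central _ z Aa).
by rewrite mX_assoc -(A_central _ z Aa) -mX_assoc.
Qed.

Lemma rmul_right a x w : mX (rmul a x) w = rmul a (Some (lmul x w)).
Proof. by case: x => [x|] //=; rewrite mX_assoc. Qed.

Lemma rmul_rmul a b x y : A a -> A b -> mX (rmul a x) (rmul b y) = rmul (rmul c x) y.
Proof.
move=> Aa Ab; rewrite -(AA_c _ _ Aa Ab).
have axb x' : mX (mX a x') b = mX (mX a b) x'.
  by rewrite -mX_assoc -(A_central _ x' Ab) mX_assoc.
by case: x => [x|]; case: y => [y|] //=; rewrite ?mX_assoc ?axb.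
Qed.

Lemma conv_principal_tail z y : conv mX (principal z) (tail y) = tail (Some (rmul z y)).
Proof.
apply/funext => B; apply/propext; rewrite /conv /tail /=.
by apply: U_agree => a Aa /=; rewrite rmul_left.
Qed.

Lemma conv_tail_principal x w : conv mX (tail x) (principal w) = tail (Some (lmul x w)).
Proof.
apply/funext => B; apply/propext; rewrite /conv /tail /=.
by apply: U_agree => a _; rewrite /principal /= rmul_right.
Qed.

Lemma conv_tail_tail x y : conv mX (tail x) (tail y) = principal (rmul (rmul c x) y).
Proof.
apply/funext => B; apply/propext; rewrite /conv /tail /principal /=.
set k := rmul (rmul c x) y.
have inner a : A a -> U [set b | B (mX (rmul a x) (rmul b y))] <-> B k.
  by move=> Aa; rewrite -(U_const (B k)); apply: U_agree => b Ab /=; rewrite rmul_rmul.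
by rewrite -(U_const (B k)); apply: U_agree => a Aa /=; apply: inner.
Qed.

Lemma is_point_conv F G : is_point F -> is_point G -> is_point (conv mX F G).
Proof.
move=> [[z|x] ->] [[w|y] ->] /=.
- by exists (inl (mX z w)).
- by exists (inr (Some (rmul z y))); rewrite conv_principal_tail.
- by exists (inr (Some (lmul x w))); rewrite conv_tail_principal.
- by exists (inl (rmul (rmul c x) y)); rewrite conv_tail_tail.
Qed.

Lemma stone_is_point_conv (F G : stone is_point) : is_point (conv mX (sval F) (sval G)).
Proof. exact: is_point_conv (proj2 (svalP F)) (proj2 (svalP G)). Qed.

(* Joint continuity: at principal factors use singletons, and at two
   translates use {a.x | a in A} and {b.y | b in A}, on which the product is
   constantly (cx)y. *)
Lemma point_locally_determined : locally_determined mX is_point.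
Proof.
move=> F G B; have [_ [kF eF]] := svalP F; have [_ [kG eG]] := svalP G.
case: kF eF => [z|x] eF.
  rewrite eF => zB; exists [set z], [set y | B (mX z y)]; split => // F' G'.
  by move=> /(conv_principal_l mX (stone_ultra F')) ->.
case: kG eG => [w|y] eG.
  rewrite eG => wB; exists [set s | B (mX s w)], [set w]; split => // F' G' F'C.
  by move=> /(conv_principal_r mX (stone_ultra G')) ->.
rewrite eF eG conv_tail_tail => kB.
exists (rmul^~ x @` A), (rmul^~ y @` A); split.
- by apply: (filterS (F := U)) UA => a Aa; exists a.
- by apply: (filterS (F := U)) UA => a Aa; exists a.
- move=> F' G' F'C G'D.
  apply: (conv_const mX (stone_ultra F') (stone_ultra G') _ kB F'C G'D).
  by move=> _ _ [a Aa <-] [b Ab <-]; apply: rmul_rmul.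
Qed.

Definition limit_point : stone is_point :=
  exist _ (tail None) (conj (tail_ultra None) (ex_intro _ (inr None) erefl)).

Lemma limit_point_free z : ~ U [set z] -> sval limit_point <> principal z.
Proof. by move=> Uz limz; apply: Uz; have : sval limit_point [set z] by rewrite limz. Qed.

End Construction.

Theorem lemma5p3 (X : Type) (mX : X -> X -> X) :
  associative_op mX -> TzS_closed mX ->
  forall A : set X, A `<=` sg_center mX -> ~ finite_set A ->
    ~ (exists c : X, setmul mX A = [set c]).
Proof.
move=> mA Xclosed A Acen Ainf [c AAc].
have A_central a x : A a -> mX a x = mX x a by move=> /Acen.
have AA_c a b : A a -> A b -> mX a b = c.
  by move=> Aa Ab; rewrite -[_ = c]/([set c] (mX a b)) -AAc; exists a, b.
have [U [Uu UA Ufree]] := free_ultrafilter A Ainf.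
pose P_principal := principal_is_point mX U.
pose P_conv := stone_is_point_conv _ _ _ _ mA A_central AA_c Uu UA.
have Y_TzS := stone_TzS _ _ P_conv mA
  (point_locally_determined _ _ _ _ mA A_central AA_c Uu UA).
have range_closed :=
  Xclosed _ _ _ Y_TzS (stone_point_embedding _ _ P_principal P_conv).
have [z _ z_limit] :=
  range_closed _ (stone_point_dense _ P_principal (limit_point mX U Uu)).
exact: limit_point_free _ _ Uu _ (Ufree z) (esym (congr1 sval z_limit)).
Qed.
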